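(* Let $y:A\to\Delta(B)$ be given (with $A=S$). Then: (a) $U^1(\mu_0,y)\ge U^1(\mu,y)$ for every $\mu\in\mathcal{M}$ if and only if $\sum_{s\in S}u^1(s,y(\cdot\mid s))\ge\sum_{s\in S}u^1(s,y(\cdot\mid\phi(s)))$ for every permutation $\phi$ of $S$. (b) $U^1(\mu_0,y)>U^1(\mu,y)$ for every $\mu\in\mathcal{M}$ with $\mu\neq\mu_0$ if and only if $\sum_{s\in S}u^1(s,y(\cdot\mid s))>\sum_{s\in S}u^1(s,y(\cdot\mid\phi(s)))$ for every permutation $\phi$ of $S$ other than the identity.
   Context: $S$ is a finite set, $A=S$, $B$ a finite set, $u^1:S\times B\to\mathbb{R}$, extended linearly to $u^1(s,\beta)=\sum_b\beta(b)u^1(s,b)$ for $\beta\in\Delta(B)$. $m\in\Delta(S)$ has full support (it is the invariant measure of an irreducible Markov chain on $S$). $\mathcal{M}\subset\Delta(S\times A)$ is the set of distributions on $S\times A$ both of whose marginals equal $m$; $\mu_0\in\mathcal{M}$ is given by $\mu_0(s,s)=m(s)$, $\mu_0(s,a)=0$ for $s\ne a$. For $\mu\in\mathcal{M}$, $U^1(\mu,y)=\sum_{s,a}\mu(s,a)u^1(s,y(\cdot\mid a))$. *)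

From mathcomp Require Import all_boot all_order all_algebra all_fingroup.
Set Implicit Arguments. Unset Strict Implicit. Unset Printing Implicit Defensive.
Import Order.TTheory GRing.Theory Num.Theory.
Local Open Scope ring_scope.

Definition is_dist (R : realFieldType) (T : finType) (p : T -> R) : Prop :=
  (forall t, 0 <= p t) /\ \sum_(t : T) p t = 1.

Definition uext (R : realFieldType) (S B : finType) (u1 : S -> B -> R)
  (s : S) (beta : B -> R) : R := \sum_(b : B) beta b * u1 s b.

Definition in_M (R : realFieldType) (S : finType) (m : S -> R)
  (mu : {ffun S * S -> R}) : Prop :=
  (forall sa, 0 <= mu sa) /\
  (forall s, \sum_(a : S) mu (s, a) = m s) /\
  (forall a, \sum_(s : S) mu (s, a) = m a).

Definition mu0 (R : realFieldType) (S : finType) (m : S -> R) : {ffun S * S -> R} :=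
  [ffun sa => if sa.1 == sa.2 then m sa.1 else 0].

Definition U1 (R : realFieldType) (S B : finType) (u1 : S -> B -> R)
  (mu : {ffun S * S -> R}) (y : S -> B -> R) : R :=
  \sum_(s : S) \sum_(a : S) mu (s, a) * uext u1 s (y a).

From mathcomp Require Import all_boot all_order all_algebra all_fingroup.
From mathcomp Require Import ring.

(* Write v(s,a) = u^1(s, y(.|a)).  Since the row marginals of mu are m,
   U^1(mu0,y) - U^1(mu,y) = sum_{s,a} mu(s,a) (v(s,s) - v(s,a)).  The off-diagonal
   part of mu is a circulation: inflow equals outflow at every state.  A nonzero
   circulation carries a cycle, i.e. a permutation phi <> id with mu(s, phi s) > 0
   wherever phi moves s; removing the least mass on that cycle keeps a circulation
   with smaller support.  Hence the difference is a nonnegative combination of the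
   gaps sum_s v(s,s) - sum_s v(s, phi s), with a positive coefficient on some
   phi <> id when mu <> mu0.  Conversely mu0 - eps I + eps P_phi lies in M for
   0 < eps <= min m, and its value is U^1(mu0,y) - eps * gap(phi). *)

Set Implicit Arguments. Unset Strict Implicit. Unset Printing Implicit Defensive.
Import Order.TTheory GRing.Theory Num.Theory.
Local Open Scope ring_scope.

Section Circulations.
Variables (R : realFieldType) (T : finType).
Implicit Types (nu w : T -> T -> R) (ph : {perm T}).

Definition nonneg_mx nu := forall s a, 0 <= nu s a.
Definition balanced nu := forall s, \sum_a nu s a = \sum_a nu a s.
Definition flow_edge nu x y := (x != y) && (0 < nu x y).
Definition offdiag_supp nu : {set T * T} := [set p | flow_edge nu p.1 p.2].
Definition weight w nu := \sum_s \sum_a nu s a * w s a.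
Definition cycle_mx ph (c : R) s a := if (ph s != s) && (a == ph s) then c else 0.

Lemma sum_if_eq (F : T -> R) x : \sum_a (if a == x then F a else 0) = F x.
Proof. by rewrite -big_mkcond big_pred1_eq. Qed.

Lemma sum_eq_if (F : T -> R) x : \sum_a (if x == a then F a else 0) = F x.
Proof. by rewrite -big_mkcond (big_pred1 x) // => a; rewrite /= eq_sym. Qed.

Lemma cycle_mx_row ph c s : \sum_a cycle_mx ph c s a = if ph s != s then c else 0.
Proof.
rewrite /cycle_mx; case: (ph s != s) => /=; last by rewrite big1.
exact: (sum_if_eq (fun _ => c)).
Qed.

Lemma cycle_mx_col ph c a : \sum_s cycle_mx ph c s a = if ph a != a then c else 0.
Proof.
rewrite (bigD1 (ph^-1 a)%g) //= /cycle_mx permKV eqxx andbT.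
rewrite -(inj_eq (@perm_inj _ ph)) permKV eq_sym big1 ?addr0 // => s.
by case: ifP => // /andP [_ /eqP ->]; rewrite permK eqxx.
Qed.

Lemma weight_cycle_mx w ph c : (forall s, w s s = 0) ->
  weight w (cycle_mx ph c) = c * \sum_s w s (ph s).
Proof.
move=> w0; rewrite /weight mulr_sumr; apply: eq_bigr => s _.
rewrite /cycle_mx; case: eqP => [->|_] /=.
  by rewrite w0 mulr0 big1 // => a _; rewrite mul0r.
rewrite -(sum_if_eq (fun a => c * w s a)).
by apply: eq_bigr => a _; case: ifP; rewrite ?mul0r.
Qed.

Lemma weight_offdiag_supp0 w nu : (forall s, w s s = 0) -> nonneg_mx nu ->
  offdiag_supp nu = set0 -> weight w nu = 0.
Proof.
move=> w0 nu_ge0 supp0; rewrite /weight big1 // => s _; rewrite big1 // => a _.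
have [<-|neq_sa] := eqVneq s a; first by rewrite w0 mulr0.
have : (s, a) \notin offdiag_supp nu by rewrite supp0 inE.
rewrite inE /flow_edge neq_sa /= -leNgt => nu_le0.
suff -> : nu s a = 0 by rewrite mul0r.
by apply/eqP; rewrite eq_le nu_le0 nu_ge0.
Qed.

Section CyclePermutation.
Variable nu : T -> T -> R.
Hypotheses (nu_ge0 : nonneg_mx nu) (nu_bal : balanced nu).

Definition next_node x := odflt x [pick y | flow_edge nu x y].

Lemma next_nodeP x : next_node x != x -> flow_edge nu x (next_node x).
Proof. by rewrite /next_node; case: pickP => [y ->|_] //=; rewrite eqxx. Qed.

Lemma flow_edge_next x y : flow_edge nu x y -> flow_edge nu x (next_node x).
Proof. by rewrite /next_node; case: pickP => [//|/(_ y) ->]. Qed.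

(* Balance at [y]: positive off-diagonal inflow forces positive off-diagonal outflow. *)
Lemma flow_edge_out x y : flow_edge nu x y -> exists z, flow_edge nu y z.
Proof.
move=> /andP [neq_xy nu_xy_gt0].
have out_in : \sum_(a | a != y) nu y a = \sum_(a | a != y) nu a y.
  by move: (nu_bal y); rewrite (bigD1 y) //= [RHS](bigD1 y) //=; apply: addrI.
have : 0 < \sum_(a | a != y) nu y a.
  rewrite out_in (bigD1 x) //=; apply: ltr_pwDl => //.
  by apply: sumr_ge0 => a _; apply: nu_ge0.
have [z edge_yz|no_out] := pickP (flow_edge nu y); first by exists z.
rewrite big1 ?ltxx // => a neq_ay.
move: (no_out a); rewrite /flow_edge eq_sym neq_ay /= => /negbT; rewrite -leNgt => nu_le0.
by apply/eqP; rewrite eq_le nu_le0 nu_ge0.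
Qed.

Lemma flow_edge_iter x y n : flow_edge nu x y ->
  exists z, flow_edge nu (iter n next_node x) z.
Proof.
move=> edge_xy; elim: n => [|n [z edge_z]]; first by exists y.
by rewrite iterS; apply: flow_edge_out (flow_edge_next edge_z).
Qed.

Definition periodic x := fconnect next_node (next_node x) x.

Lemma periodicP x :
  reflect (exists2 k, (0 < k)%N & iter k next_node x = x) (periodic x).
Proof.
apply: (iffP idP) => [per_x|[[//|k] _ iter_x]].
  by exists (findex next_node (next_node x) x).+1; rewrite // iterSr iter_findex.
by rewrite /periodic -{2}iter_x iterSr fconnect_iter.
Qed.

Lemma periodic_next x : periodic x -> periodic (next_node x).
Proof.
move=> /periodicP [k k_gt0 iter_x]; apply/periodicP; exists k => //.
by rewrite -iterSr iterS iter_x.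
Qed.

Lemma periodic_iter x : exists n, periodic (iter n next_node x).
Proof.
have /trajectP [i lt_i_ord iter_ord] := looping_order next_node x.
exists i; apply/periodicP; exists (fingraph.order next_node x - i)%N; first by rewrite subn_gt0.
by rewrite -iterD subnK ?(ltnW lt_i_ord).
Qed.

Definition cycle_fun x := if periodic x then next_node x else x.

(* Two periodic points with the same successor coincide: iterate both a common period. *)
Lemma cycle_fun_inj : injective cycle_fun.
Proof.
have next_inj x x' : periodic x -> periodic x' -> next_node x = next_node x' -> x = x'.
  move=> /periodicP [k k_gt0 iter_x] /periodicP [k' k'_gt0 iter_x'] eq_next.
  have iter_mul z l n : iter l next_node z = z -> iter (l * n) next_node z = z.
    by move=> iter_z; elim: n => [|n IH]; rewrite ?muln0 // mulnS iterD IH.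
  have kk'_gt0 : (0 < k * k')%N by rewrite muln_gt0 k_gt0.
  rewrite -(iter_mul _ _ k' iter_x) -(iter_mul _ _ k iter_x') (mulnC k').
  by rewrite -(prednK kk'_gt0) !iterSr eq_next.
rewrite /cycle_fun => x x'.
case per_x: (periodic x); case per_x': (periodic x') => //.
- exact: next_inj.
- by move=> eq_x; move: (periodic_next per_x); rewrite eq_x per_x'.
- by move=> eq_x'; move: (periodic_next per_x'); rewrite -eq_x' per_x.
Qed.

Definition cycle_perm : {perm T} := perm cycle_fun_inj.

Lemma cycle_perm_pos s : cycle_perm s != s -> 0 < nu s (cycle_perm s).
Proof.
rewrite permE /cycle_fun; case: (periodic s); last by rewrite eqxx.
by move=> /next_nodeP /andP [].
Qed.

Lemma cycle_perm_nontrivial x y : flow_edge nu x y -> cycle_perm != 1%g.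
Proof.
move=> edge_xy; have [n per_z] := periodic_iter x.
have [z' /flow_edge_next /andP [neq_next _]] := flow_edge_iter n edge_xy.
apply: contraNneq neq_next => perm1_eq.
by move: (perm1 (iter n next_node x)); rewrite -perm1_eq permE /cycle_fun per_z eq_sym => ->.
Qed.

End CyclePermutation.

Lemma weightB w nu nu' :
  weight w (fun s a => nu s a - nu' s a) = weight w nu - weight w nu'.
Proof.
rewrite /weight -sumrB; apply: eq_bigr => s _.
by rewrite -sumrB; apply: eq_bigr => a _; rewrite mulrBl.
Qed.

Lemma moved_point ph : ph != 1%g -> exists s, ph s != s.
Proof.
move=> ph_neq1; apply/existsP; apply: contraNT ph_neq1 => /existsPn fixed.
by apply/eqP/permP => s; rewrite perm1; apply/eqP/negbNE.
Qed.

Lemma balanced_sub_cycle_mx nu ph c : balanced nu ->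
  balanced (fun s a => nu s a - cycle_mx ph c s a).
Proof. by move=> nu_bal s; rewrite !sumrB nu_bal cycle_mx_row cycle_mx_col. Qed.

(* Peel off the cycle of [cycle_perm nu], with the smallest mass along it. *)
Lemma balanced_cycle_split nu x y : nonneg_mx nu -> balanced nu ->
  flow_edge nu x y -> exists c ph,
  let nu' := fun s a => nu s a - cycle_mx ph c s a in
  [/\ 0 < c, ph != 1%g, nonneg_mx nu' &
      (#|offdiag_supp nu'| < #|offdiag_supp nu|)%N].
Proof.
move=> nu_ge0 nu_bal edge_xy; set ph := cycle_perm nu.
have ph_neq1 : ph != 1%g := cycle_perm_nontrivial nu_ge0 nu_bal edge_xy.
have [s0 moved_s0] := moved_point ph_neq1.
have [s1 moved_s1 min_s1] :=
  @arg_minP _ _ _ s0 [pred s | ph s != s] (fun s => nu s (ph s)) moved_s0.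
move: moved_s1 => /= moved_s1.
exists (nu s1 (ph s1)), ph; split => //.
- exact: cycle_perm_pos.
- move=> s a; rewrite subr_ge0 /cycle_mx.
  by case: ifP => // /andP [moved_s /eqP ->]; apply: min_s1.
apply/proper_card/properP; split.
  apply/subsetP => -[s a]; rewrite !inE /flow_edge /= => /andP [-> /= /lt_le_trans].
  by apply; rewrite lerBlDr lerDl /cycle_mx; case: ifP.
exists (s1, ph s1); first by rewrite inE /flow_edge eq_sym moved_s1 cycle_perm_pos.
by rewrite inE /flow_edge /cycle_mx moved_s1 eqxx subrr ltxx andbF.
Qed.

Section BalancedWeight.
Variable w : T -> T -> R.
Hypothesis w_diag0 : forall s, w s s = 0.

Lemma balanced_weight_ge0 nu :
  (forall ph, 0 <= \sum_s w s (ph s)) -> nonneg_mx nu -> balanced nu -> 0 <= weight w nu.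
Proof.
move=> w_perm_ge0; have [n] := ubnP #|offdiag_supp nu|.
elim: n nu => // n IH nu lt_supp nu_ge0 nu_bal.
have [supp0|[[x y]]] := set_0Vmem (offdiag_supp nu).
  by rewrite weight_offdiag_supp0.
rewrite inE => /(balanced_cycle_split nu_ge0 nu_bal) [c [ph [c_gt0 _ nu'_ge0 lt_supp']]].
rewrite -(subrK (weight w (cycle_mx ph c)) (weight w nu)) -weightB.
rewrite weight_cycle_mx //; apply: addr_ge0; last exact: mulr_ge0 (ltW c_gt0) (w_perm_ge0 ph).
apply: IH nu'_ge0 (balanced_sub_cycle_mx _ _ nu_bal).
exact: leq_trans lt_supp' lt_supp.
Qed.

Lemma balanced_weight_gt0 nu x y :
  (forall ph, ph != 1%g -> 0 < \sum_s w s (ph s)) -> nonneg_mx nu -> balanced nu ->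
  flow_edge nu x y -> 0 < weight w nu.
Proof.
move=> w_perm_gt0 nu_ge0 nu_bal /(balanced_cycle_split nu_ge0 nu_bal).
move=> [c [ph [c_gt0 ph_neq1 nu'_ge0 _]]].
rewrite -(subrK (weight w (cycle_mx ph c)) (weight w nu)) -weightB.
rewrite weight_cycle_mx //; apply: ltr_wpDl; last exact: mulr_gt0 c_gt0 (w_perm_gt0 ph ph_neq1).
apply: balanced_weight_ge0 nu'_ge0 (balanced_sub_cycle_mx _ _ nu_bal) => ph'.
have [->|ph'_neq1] := eqVneq ph' 1%g; last exact: ltW (w_perm_gt0 ph' ph'_neq1).
by rewrite big1 // => s _; rewrite perm1 w_diag0.
Qed.
End BalancedWeight.
End Circulations.

Lemma pos_lower_bound (R : realFieldType) (T : finType) (f : T -> R) :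
  (forall t, 0 < f t) -> exists2 e, 0 < e & forall t, e <= f t.
Proof.
move=> f_gt0; have [t0 _|T0] := pickP (@predT T); last by exists 1 => // t; move: (T0 t).
have [t1 _ min_t1] := @arg_minP _ _ _ t0 predT f isT.
by exists (f t1) => // t; apply: min_t1.
Qed.

Section Couplings.
Variables (R : realFieldType) (S : finType) (m : S -> R).
Implicit Types (mu : {ffun S * S -> R}) (v : S -> S -> R) (ph : {perm S}).

Definition coupling_mx mu s a := mu (s, a).
Definition regret v s a := v s s - v s a.

Lemma sum_regret_perm v ph :
  \sum_s regret v s (ph s) = \sum_s v s s - \sum_s v s (ph s).
Proof. exact: sumrB. Qed.

Lemma in_M_nonneg mu : in_M m mu -> nonneg_mx (coupling_mx mu).
Proof. by move=> [mu_ge0 _] s a; apply: mu_ge0. Qed.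

Lemma in_M_balanced mu : in_M m mu -> balanced (coupling_mx mu).
Proof. by move=> [_ [row col]] s; rewrite row col. Qed.

Lemma weight_mu0 v : weight v (coupling_mx (mu0 m)) = \sum_s m s * v s s.
Proof.
apply: eq_bigr => s _; rewrite -(sum_eq_if (fun a => m s * v s a)).
by apply: eq_bigr => a _; rewrite /coupling_mx ffunE /=; case: ifP; rewrite ?mul0r.
Qed.

Lemma weight_mu0_sub v mu : in_M m mu ->
  weight v (coupling_mx (mu0 m)) - weight v (coupling_mx mu)
  = weight (regret v) (coupling_mx mu).
Proof.
move=> [_ [row _]]; rewrite weight_mu0 -sumrB; apply: eq_bigr => s _.
by rewrite -row mulr_suml -sumrB; apply: eq_bigr => a _; rewrite mulrBr.
Qed.

Lemma in_M_flow_edge mu : in_M m mu -> mu != mu0 m ->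
  exists x y, flow_edge (coupling_mx mu) x y.
Proof.
move=> [mu_ge0 [row _]] /eqP mu_neq.
have [[x y] edge_xy|no_edge] := pickP (fun p => flow_edge (coupling_mx mu) p.1 p.2).
  by exists x, y.
have off0 s a : s != a -> mu (s, a) = 0.
  move=> neq_sa; move: (no_edge (s, a)); rewrite /flow_edge neq_sa /= => /negbT.
  by rewrite -leNgt => mu_le0; apply/eqP; rewrite eq_le mu_le0 mu_ge0.
case: mu_neq; apply/ffunP => -[s a]; rewrite ffunE /=.
have [<-|/off0 //] := eqVneq s a.
by rewrite -row (bigD1 s) //= big1 ?addr0 // => b neq_bs; apply: off0; rewrite eq_sym.
Qed.

(* The coupling moving mass [eps] off the diagonal along [ph]:
   [mu0 - eps * I + eps * P_ph]. *)
Definition perm_coupling ph (eps : R) : {ffun S * S -> R} :=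
  [ffun p => (if p.1 == p.2 then m p.1 - eps else 0) + (if p.2 == ph p.1 then eps else 0)].

Lemma in_M_perm_coupling ph eps :
  0 <= eps -> (forall s, eps <= m s) -> in_M m (perm_coupling ph eps).
Proof.
move=> eps_ge0 eps_le; split; [|split].
- move=> [s a]; rewrite ffunE /=; apply: addr_ge0; case: ifP => // _.
  by rewrite subr_ge0.
- move=> s; under eq_bigr do rewrite ffunE /=.
  by rewrite big_split /= (sum_eq_if (fun _ => m s - eps)) (sum_if_eq (fun _ => eps)) subrK.
- move=> a; under eq_bigr do rewrite ffunE /=.
  rewrite big_split /= (sum_if_eq (fun s => m s - eps)) (bigD1 (ph^-1 a)%g) //=.
  rewrite permKV eqxx big1 ?addr0 ?subrK // => s neq_s.
  by case: eqP => // eq_a; rewrite eq_a permK eqxx in neq_s.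
Qed.

Lemma perm_coupling_neq_mu0 ph eps : 0 < eps -> ph != 1%g -> perm_coupling ph eps != mu0 m.
Proof.
move=> eps_gt0 /moved_point [s moved_s]; apply/eqP => /ffunP /(_ (s, ph s)) /eqP.
by rewrite !ffunE /= [s == _]eq_sym (negbTE moved_s) eqxx add0r gt_eqF.
Qed.

Lemma weight_perm_coupling v ph eps :
  weight v (coupling_mx (perm_coupling ph eps))
  = weight v (coupling_mx (mu0 m)) - eps * (\sum_s v s s - \sum_s v s (ph s)).
Proof.
transitivity (\sum_s ((m s - eps) * v s s + eps * v s (ph s))).
  apply: eq_bigr => s _; rewrite /coupling_mx.
  under eq_bigr => a _ do rewrite ffunE /= mulrDl !(fun_if ( *%R^~ (v s a))) !mul0r.
  by rewrite big_split /= (sum_eq_if (fun a => (m s - eps) * v s a))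
    (sum_if_eq (fun a => eps * v s a)).
rewrite weight_mu0 big_split /=; under eq_bigr do rewrite mulrBl.
by rewrite sumrB -!mulr_sumr; ring.
Qed.

End Couplings.

Theorem lemma1 (R : realFieldType) (S B : finType) (u1 : S -> B -> R)
  (m : S -> R) (hm_pos : forall s, 0 < m s) (hm_sum : \sum_(s : S) m s = 1)
  (y : S -> B -> R) (hy : forall a, is_dist (y a)) :
  ((forall mu, in_M m mu -> U1 u1 mu y <= U1 u1 (mu0 m) y) <->
   (forall phi : {perm S},
      \sum_(s : S) uext u1 s (y (phi s)) <= \sum_(s : S) uext u1 s (y s)))
  /\
  ((forall mu, in_M m mu -> mu <> mu0 m -> U1 u1 mu y < U1 u1 (mu0 m) y) <->
   (forall phi : {perm S}, phi <> 1%g ->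
      \sum_(s : S) uext u1 s (y (phi s)) < \sum_(s : S) uext u1 s (y s))).
Proof.
pose v s a := uext u1 s (y a).
have U1E mu : U1 u1 mu y = weight v (coupling_mx mu) by [].
have [eps eps_gt0 eps_le] := pos_lower_bound hm_pos.
have coupling_M ph := in_M_perm_coupling ph (ltW eps_gt0) eps_le.
have regret_diag0 s : regret v s s = 0 by apply: subrr.
split; split.
- move=> mu0_opt ph; move: (mu0_opt _ (coupling_M ph)).
  by rewrite !U1E weight_perm_coupling gerBl pmulr_rge0 // subr_ge0.
- move=> id_opt mu mu_M; rewrite !U1E -subr_ge0 weight_mu0_sub //.
  apply: (balanced_weight_ge0 regret_diag0) (in_M_nonneg mu_M) (in_M_balanced mu_M) => ph.
  by rewrite sum_regret_perm subr_ge0; apply: id_opt.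
- move=> mu0_opt ph /eqP ph_neq1.
  move: (mu0_opt _ (coupling_M ph) (elimN eqP (perm_coupling_neq_mu0 m eps_gt0 ph_neq1))).
  by rewrite !U1E weight_perm_coupling gtrBl pmulr_rgt0 // subr_gt0.
- move=> id_opt mu mu_M /eqP mu_neq; rewrite !U1E -subr_gt0 weight_mu0_sub //.
  have [x [x' edge]] := in_M_flow_edge mu_M mu_neq.
  apply: (balanced_weight_gt0 regret_diag0) (in_M_nonneg mu_M) (in_M_balanced mu_M) edge.
  move=> ph /eqP.
  by rewrite sum_regret_perm subr_gt0; apply: id_opt.
Qed.
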